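(* Let $b\ge2$ be an integer and let $w=d_1\dots d_p$ be a fixed block of $b$-ary digits with $p\ge1$. Let $u=d_1\dots d_{p-1}$ and $v=d_2\dots d_p$. Then $Z_w(\epsilon,0,u)=Z_w(v,0)$ as power series in $t$.
   Context: Strings are finite sequences over $\{0,\dots,b-1\}$, and $\epsilon$ is the empty string. $k_w(X)$ is the number of possibly overlapping occurrences of $w$ in $X$. $Z_w(\epsilon,0,u)=\sum_l a_lt^l$, where $a_l$ is the number of strings of length $l$ with $k_w=0$ and suffix $u$. $Z_w(v,0)=\sum_l c_lt^l$, where $c_l$ is the number of strings of length $l$ with $k_w=0$ and prefix $v$. *)

From mathcomp Require Import all_boot.
Set Implicit Arguments. Unset Strict Implicit. Unset Printing Implicit Defensive.

Definition occ (b : nat) (w X : seq 'I_b) : nat :=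
  if size w <= size X then
    count (fun i => take (size w) (drop i X) == w) (iota 0 (size X - size w).+1)
  else 0.

(* a_l: number of strings of length l with k_w = 0 and suffix u;
   the power series Z_w(eps,0,u) = sum_l a_l t^l is identified with
   its coefficient sequence. *)
Definition Z_suffix (b : nat) (w u : seq 'I_b) (l : nat) : nat :=
  #|[set X : l.-tuple 'I_b | (occ w X == 0) && suffix u X]|.

(* c_l: number of strings of length l with k_w = 0 and prefix v;
   Z_w(v,0) = sum_l c_l t^l. *)
Definition Z_prefix (b : nat) (w v : seq 'I_b) (l : nat) : nat :=
  #|[set X : l.-tuple 'I_b | (occ w X == 0) && prefix v X]|.

From mathcomp Require Import all_boot.

(* Let F_l count the strings of length l avoiding w.  Prepending a digit to a
   string X of length l that avoids w yields a string avoiding w unless the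
   digit is d_1 and X starts with v, hence c_l = b F_l - F_{l+1}.  Reversal
   maps strings avoiding w to strings avoiding rev w, so F_l is the same for
   w and rev w, and it turns "suffix u" into "prefix rev u = behead (rev w)".
   Thus a_l for w is c_l for rev w, which is b F_l - F_{l+1} = c_l for w. *)

Set Implicit Arguments.
Unset Strict Implicit.
Unset Printing Implicit Defensive.

Section BigTuple.

Variables (R : Type) (idx : R) (op : Monoid.com_law idx) (T : finType).

Lemma big_tuple_rev n (F : n.-tuple T -> R) :
  \big[op/idx]_(X : n.-tuple T) F X = \big[op/idx]_(X : n.-tuple T) F [tuple of rev X].
Proof.
by apply: reindex_inj => X Y /(congr1 val)/(inv_inj revK)/val_inj.
Qed.

Lemma big_tuple_cons n (F : n.+1.-tuple T -> R) :
  \big[op/idx]_(X : n.+1.-tuple T) F X =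
  \big[op/idx]_(x : T) \big[op/idx]_(X : n.-tuple T) F [tuple of x :: X].
Proof.
rewrite pair_big (reindex (fun p : T * n.-tuple T => [tuple of p.1 :: p.2])) //.
apply: onW_bij; exists (fun X => (thead X, [tuple of behead X])).
  by case=> x X; congr pair; apply: val_inj.
by move=> X; rewrite [RHS]tuple_eta.
Qed.

End BigTuple.

Definition avoid_count (T : finType) (w : seq T) (P : pred (seq T)) (n : nat) :=
  \sum_(X : n.-tuple T) (~~ infix w X && P X).

Section AvoidCount.

Variable T : finType.
Implicit Types (x : T) (v w : seq T) (P : pred (seq T)).

Lemma avoid_count_rev w P n :
  avoid_count (rev w) P n = avoid_count w (fun X => P (rev X)) n.
Proof.
rewrite /avoid_count big_tuple_rev; apply: eq_bigr => X _.
by rewrite infix_rev.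
Qed.

Lemma avoid_count_cons x v n :
  #|T| * avoid_count (x :: v) predT n =
  avoid_count (x :: v) predT n.+1 + avoid_count (x :: v) (prefix v) n.
Proof.
rewrite /avoid_count big_tuple_cons exchange_big big_distrr -big_split.
apply: eq_bigr => X _ /=.
rewrite -sum_nat_const -(big_pred1_eq addn x (fun=> ~~ infix (x :: v) X && prefix v X)) big_mkcond.
rewrite -big_split; apply: eq_bigr => d _ /=.
by rewrite eq_sym; case: eqP; case: (prefix v X); case: infix.
Qed.

Lemma avoid_count_behead w n : 0 < size w ->
  avoid_count w (prefix (behead w)) n =
  #|T| * avoid_count w predT n - avoid_count w predT n.+1.
Proof. by case: w => // x v _; rewrite avoid_count_cons addKn. Qed.

Lemma avoid_count_suffix_belast w n : 0 < size w ->
  avoid_count w (suffix (take (size w).-1 w)) n =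
  avoid_count w (prefix (behead w)) n.
Proof.
move=> w_gt0; have rev_w_gt0 : 0 < size (rev w) by rewrite size_rev.
have rev_belast : rev (take (size w).-1 w) = behead (rev w).
  case/lastP: w w_gt0 {rev_w_gt0} => // u x _.
  by rewrite size_rcons -cats1 take_size_cat // rev_cat.
transitivity (avoid_count (rev w) (prefix (behead (rev w))) n).
  by rewrite -rev_belast avoid_count_rev.
by rewrite (avoid_count_behead n w_gt0) (avoid_count_behead n rev_w_gt0) !avoid_count_rev.
Qed.

End AvoidCount.

Lemma occ_eq0 b (w X : seq 'I_b) : (occ w X == 0) = ~~ infix w X.
Proof.
rewrite /occ; case: leqP => [size_le|size_gt]; last first.
  apply/esym/negP => /infixP [s [s' def_X]].
  by move: size_gt; rewrite def_X !size_cat ltnNge addnCA leq_addr.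
rewrite eqn0Ngt -has_count; congr negb; apply/hasP/infixP.
  move=> [i _ /eqP w_at_i]; exists (take i X), (drop (size w) (drop i X)).
  by rewrite -{1}w_at_i !cat_take_drop.
move=> [s [s' def_X]]; exists (size s).
  by rewrite mem_iota ltnS def_X !size_cat addnCA addKn /= leq_addr.
by rewrite def_X drop_size_cat // take_size_cat.
Qed.

Lemma card_occ_eq0 b (w : seq 'I_b) (P : pred (seq 'I_b)) n :
  #|[set X : n.-tuple 'I_b | (occ w X == 0) && P X]| = avoid_count w P n.
Proof.
rewrite -sum1dep_card big_mkcond; apply: eq_bigr => X _.
by rewrite occ_eq0; case: ifP.
Qed.

Theorem lemma6 (b : nat) (w : seq 'I_b) :
  2 <= b -> 1 <= size w ->
  forall l : nat,
    Z_suffix w (take (size w).-1 w) l = Z_prefix w (behead w) l.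
Proof.
move=> _ w_gt0 l.
by rewrite /Z_suffix /Z_prefix !card_occ_eq0 avoid_count_suffix_belast.
Qed.
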